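(* Let $(M,A)$ be a $d$-dimensional BUT-manifold. Then $M$ cannot be covered by $d+1$ closed sets none of which contains a pair $(x,A(x))$ of antipodal points.
   Context: A BUT (Borsuk–Ulam type) manifold is a pair $(M,A)$ where $M$ is a connected compact piecewise-linear $d$-dimensional manifold without boundary and $A:M\to M$ is a free simplicial involution ($A(A(x))=x$, $A(x)\neq x$), such that for every continuous $g:M\to\mathbb{R}^d$ there is $x\in M$ with $g(A(x))=g(x)$. *)

From HB Require Import structures.
From mathcomp Require Import all_boot all_order all_algebra.
From mathcomp Require Import finmap.
From mathcomp Require Import all_classical all_reals all_analysis.
From Stdlib Require Import Relations.
Set Implicit Arguments. Unset Strict Implicit. Unset Printing Implicit Defensive.
Import Order.TTheory GRing.Theory Num.Theory.
Import numFieldNormedType.Exports.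
Local Open Scope fset_scope.

Definition cplx := {fset {fset nat}}.

Definition is_complex (K : cplx) : Prop :=
  fset0 \notin K /\
  (forall s t : {fset nat}, s \in K -> t `<=` s -> t != fset0 -> t \in K).

Definition bd_simplex (W : {fset nat}) : cplx :=
  [fset t in fpowerset W | (t != fset0) && (t != W)].

Definition link (K : cplx) (s : {fset nat}) : cplx :=
  [fset t in K | (fsetI t s == fset0) && (t `|` s \in K)].

(* bistellar (Pachner) move: if lk_K(s) = bd(t) with t not in K,
   replace s * bd(t) by bd(s) * t. *)
Definition bistellar_move (K K' : cplx) : Prop :=
  exists s t : {fset nat},
    [/\ s \in K, t != fset0, t \notin K, fsetI t s == fset0 &
        link K s = bd_simplex t] /\
        K' = [fset r in K | ~~ (s `<=` r)]
             `|` [fset a `|` t | a in [fset a in fpowerset s | a != s]].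

Definition bistellar_equiv : relation cplx :=
  clos_refl_sym_trans cplx bistellar_move.

(* combinatorial (PL) k-sphere: bistellarly equivalent to the boundary of a
   (k+1)-simplex (Pachner's characterization of PL spheres). *)
Definition comb_sphere (k : nat) (K : cplx) : Prop :=
  is_complex K /\
  exists W : {fset nat}, #|` W| = k.+2 /\ bistellar_equiv K (bd_simplex W).

(* combinatorial d-manifold without boundary: links of vertices are
   combinatorial (d-1)-spheres (the empty complex when d = 0). *)
Definition comb_manifold (d : nat) (K : cplx) : Prop :=
  [/\ is_complex K, K != fset0,
      (forall s, s \in K -> #|` s| <= d.+1)%N &
      forall v : nat, [fset v] \in K ->
        if d is d'.+1 then comb_sphere d' (link K [fset v])
        else link K [fset v] = fset0].

Local Close Scope fset_scope.

Local Open Scope ring_scope.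
Local Open Scope classical_set_scope.

Definition verts_below (n : nat) (K : cplx) : Prop :=
  forall s, s \in K -> forall v, v \in s -> (v < n)%N.

(* |K| as a subset of 'rV[R]_n (barycentric coordinates) *)
Definition realization (R : realType) (n : nat) (K : cplx) : set 'rV[R]_n :=
  [set x | (forall i, 0 <= x ord0 i) /\ \sum_(i < n) x ord0 i = 1 /\
           exists s, s \in K /\ forall i : 'I_n, x ord0 i != 0 -> (val i \in s)%fset].

Definition simplicial_involution (K : cplx) (A : nat -> nat) : Prop :=
  (forall s, s \in K -> (A @` s)%fset \in K) /\
  (forall s, s \in K -> forall v, v \in s -> A (A v) = v).

Definition lin_ext (R : realType) (n : nat) (A : nat -> nat) (x : 'rV[R]_n)
  : 'rV[R]_n :=
  \row_(j < n) \sum_(i < n | A i == j) x ord0 i.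

Definition BUT_manifold (R : realType) (d n : nat) (K : cplx) (A : nat -> nat)
  : Prop :=
  let M := @realization R n K in
  let Ah := @lin_ext R n A in
  [/\ comb_manifold d K, verts_below n K, connected M &
      simplicial_involution K A] /\
  (forall x, M x -> Ah x <> x) /\
      forall g : 'rV[R]_n -> 'rV[R]_d, {within M, continuous g} ->
        exists2 x, M x & g (Ah x) = g x.

From HB Require Import structures.
From mathcomp Require Import all_boot all_order all_algebra.
From mathcomp Require Import finmap.
From mathcomp Require Import all_classical all_reals all_analysis.
From mathcomp Require Import lra.
Set Implicit Arguments. Unset Strict Implicit. Unset Printing Implicit Defensive.
Import numFieldNormedType.Exports.
Import Order.TTheory GRing.Theory Num.Theory.
Local Open Scope ring_scope.
Local Open Scope classical_set_scope.

(* Given closed sets C_0, ..., C_d covering M, map x to its distances to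
   C_0, ..., C_(d-1). By the Borsuk-Ulam property some x has the same
   distances as A(x). If one of x, A(x) lies in some C_i with i < d, the
   other one is at distance 0 from the closed set C_i, hence in C_i;
   otherwise both lie in C_d. Either way some C_i contains an antipodal
   pair. *)

Section SetDistance.
Context {R : realType} {V : normedModType R}.
Implicit Types (C : set V) (x y c : V).

(* Since [inf set0 = 0], the distance to the empty set is 0. *)
Definition set_dist C x : R := inf [set `|x - c| | c in C].

Lemma set_dist_has_lbound C x : has_lbound [set `|x - c| | c in C].
Proof. by exists 0 => _ [c _ <-]. Qed.

Lemma set_dist_le C x c : C c -> set_dist C x <= `|x - c|.
Proof. by move=> Cc; apply: ge_inf; [exact: set_dist_has_lbound | exists c]. Qed.

Lemma set_dist_ge0 C x : 0 <= set_dist C x.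
Proof.
have [->|/set0P[c Cc]] := eqVneq C set0; first by rewrite /set_dist image_set0 inf0.
by apply: lb_le_inf; [exists `|x - c|, c | move=> _ [? _ <-]].
Qed.

Lemma set_dist_mem C x : C x -> set_dist C x = 0.
Proof.
move=> Cx; apply/eqP; rewrite eq_le set_dist_ge0 andbT.
by rewrite (le_trans (set_dist_le x Cx)) // subrr normr0.
Qed.

Lemma set_dist_triangle C x y : set_dist C x <= `|x - y| + set_dist C y.
Proof.
have [->|/set0P[c0 Cc0]] := eqVneq C set0.
  by rewrite /set_dist !image_set0 inf0 addr0.
rewrite -lerBlDl; apply: lb_le_inf; first by exists `|y - c0|, c0.
move=> _ [c Cc <-]; rewrite lerBlDl (le_trans (set_dist_le x Cc)) //.
by rewrite -[x - c](subrKA y) ler_normD.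
Qed.

Lemma set_dist_lipschitz C x y : `|set_dist C x - set_dist C y| <= `|x - y|.
Proof.
have := set_dist_triangle C x y; have := set_dist_triangle C y x.
by rewrite distrC ler_norml => *; apply/andP; split; lra.
Qed.

Lemma closed_set_dist_eq0 C x : closed C -> C !=set0 -> set_dist C x = 0 -> C x.
Proof.
move=> cC [c0 Cc0] dx0; rewrite (closure_id C).1 //= => B /nbhs_ballP [e /= e0 eB].
have CC0 : [set `|x - c| | c in C] !=set0 by exists `|x - c0|, c0.
have [_ [c Cc <-]] := inf_adherent e0 (conj CC0 (set_dist_has_lbound C x)).
rewrite -/(set_dist C x) dx0 add0r => xce.
by exists c; split => //; apply: eB; rewrite -ball_normE.
Qed.

End SetDistance.

Lemma nonexpansive_continuous (R : numFieldType) (V W : normedModType R)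
    (f : V -> W) :
  (forall x y, `|f x - f y| <= `|x - y|) -> continuous f.
Proof.
move=> f_nonexp x; apply/cvgrPdist_lt => e e0.
near=> y; apply: le_lt_trans (f_nonexp _ _) _.
by near: y; exact: cvgr_dist_lt.
Unshelve. all: by end_near. Qed.

Section ClosedCover.
Context {R : realType} {V : normedModType R} (d : nat) (C : 'I_d.+1 -> set V).

(* The last set [C ord_max] is deliberately left out. *)
Definition cover_dist (x : V) : 'rV[R]_d :=
  \row_(j < d) set_dist (C (lift ord_max j)) x.

Lemma cover_dist_continuous : continuous cover_dist.
Proof.
apply: nonexpansive_continuous => x y.
rewrite -[X in X <= _]/(mx_norm _) mx_normrE.
by apply: bigmax_le => // ij _; rewrite !mxE; exact: set_dist_lipschitz.
Qed.

Lemma cover_dist_eq_mem (j : 'I_d) x y :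
  closed (C (lift ord_max j)) -> cover_dist x = cover_dist y ->
  C (lift ord_max j) x -> C (lift ord_max j) y.
Proof.
move=> cC dxy Cx; apply: closed_set_dist_eq0 => //; first by exists x.
have := congr1 (fun m : 'rV[R]_d => m ord0 j) dxy; rewrite !mxE => <-.
exact: set_dist_mem.
Qed.

Lemma borsuk_ulam_closed_cover (M : set V) (T : V -> V) :
  (forall g : V -> 'rV[R]_d, {within M, continuous g} ->
     exists2 x, M x & g (T x) = g x) ->
  (forall x, M x -> M (T x)) ->
  (forall i, closed (C i)) -> (forall x, M x -> exists i, C i x) ->
  exists i x, [/\ M x, C i x & C i (T x)].
Proof.
move=> BU MT cC cover.
have [x Mx dTx] := BU _ (continuous_subspaceT cover_dist_continuous).
have [i Cix] := cover x Mx; have [k CkTx] := cover _ (MT x Mx).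
case: (unliftP ord_max i) => [j ->|->] in Cix.
  exists (lift ord_max j), x; split=> //.
  exact: cover_dist_eq_mem (cC _) (esym dTx) Cix.
case: (unliftP ord_max k) => [j ->|->] in CkTx; last by exists ord_max, x.
exists (lift ord_max j), x; split=> //.
exact: cover_dist_eq_mem (cC _) dTx CkTx.
Qed.

End ClosedCover.

Lemma lin_ext_realization (R : realType) (n : nat) (K : cplx) (A : nat -> nat)
    (x : 'rV[R]_n) :
  verts_below n K -> (forall s, s \in K -> (A @` s)%fset \in K) ->
  realization K x -> realization K (lin_ext A x).
Proof.
move=> vbK AK [x_ge0 [x_sum1 [s [sK supp_x]]]].
have AsK := AK s sK.
have A_lt i : x ord0 i != 0 -> (A i < n)%N.
  by move=> /supp_x si; apply: (vbK _ AsK); apply/imfsetP; exists (val i).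
split; first by move=> j; rewrite mxE sumr_ge0.
split.
  rewrite -{}x_sum1; under eq_bigr do rewrite mxE big_mkcond /=.
  rewrite exchange_big /=; apply: eq_bigr => i _.
  have [->|xi_neq0] := eqVneq (x ord0 i) 0; first by apply: big1 => j _; case: ifP.
  by rewrite -big_mkcond /= (big_pred1 (Ordinal (A_lt i xi_neq0))).
exists (A @` s)%fset; split=> // j; rewrite mxE => /eqP sum_neq0.
have [i /andP[/eqP Aij xi_neq0]] : exists i : 'I_n, (A i == j) && (x ord0 i != 0).
  apply: contra_notP sum_neq0 => no_i; apply: big1 => i Aij.
  by apply/eqP/negPn/negP => xi_neq0; apply: no_i; exists i; rewrite Aij.
by apply/imfsetP; exists (val i); [exact: supp_x | rewrite Aij].
Qed.

Theorem mainTheorem8 (R : realType) (d n : nat) (K : cplx) (A : nat -> nat) :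
  BUT_manifold R d n K A ->
  ~ exists F : 'I_d.+1 -> set 'rV[R]_n,
      [/\ (forall i, exists2 C : set 'rV[R]_n, closed C & F i = C `&` @realization R n K),
          (forall x, @realization R n K x -> exists i, F i x) &
          (forall i x, F i x -> ~ F i (@lin_ext R n A x))].
Proof.
move=> [[_ vbK _ [AK _]] [_ BU]] [F [F_closed F_cover F_free]].
have /choice[C C_spec] : forall i, exists C, closed C /\ F i = C `&` realization K.
  by move=> i; have [C ? ?] := F_closed i; exists C.
have F_eq i : F i = C i `&` realization K := (C_spec i).2.
have C_cover x : realization K x -> exists i, C i x.
  by move=> /F_cover[i]; rewrite F_eq => -[]; exists i.
have [i [x [Mx Cix CiAx]]] :=
  @borsuk_ulam_closed_cover R 'rV[R]_n d C (realization K) (lin_ext A) BU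
    (fun x => @lin_ext_realization R n K A x vbK AK)
    (fun i => (C_spec i).1) C_cover.
apply: (F_free i x); rewrite F_eq //; split=> //.
exact: lin_ext_realization.
Qed.
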